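(* Every full triangle functor $F:\mathcal A\to\mathcal B$ between triangulated categories is objective.
   Context: $F$ is objective if every morphism $f$ in $\mathcal A$ with $F(f)=0$ factors through an object $K$ of $\mathcal A$ with $F(K)=0$. A triangle functor is a pair $(F,\xi)$ with $F$ additive and $\xi:F[1]\to[1]F$ a natural isomorphism such that $F$ sends distinguished triangles $(X,Y,Z,u,v,w)$ to distinguished triangles $(F(X),F(Y),F(Z),F(u),F(v),\xi_XF(w))$. *)

From mathcomp Require Import all_boot all_algebra.
Set Implicit Arguments. Unset Strict Implicit. Unset Printing Implicit Defensive.
Import GRing.Theory.
Local Open Scope ring_scope.

Record PreaddCat := {
  Obj :> Type;
  Hom : Obj -> Obj -> zmodType;
  idm : forall X, Hom X X;
  comp : forall X Y Z, Hom Y Z -> Hom X Y -> Hom X Z;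
  compA : forall X Y Z W (h : Hom Z W) (g : Hom Y Z) (f : Hom X Y),
    comp h (comp g f) = comp (comp h g) f;
  comp1m : forall X Y (f : Hom X Y), comp (idm Y) f = f;
  compm1 : forall X Y (f : Hom X Y), comp f (idm X) = f;
  compDl : forall X Y Z (g1 g2 : Hom Y Z) (f : Hom X Y),
    comp (g1 + g2) f = comp g1 f + comp g2 f;
  compDr : forall X Y Z (g : Hom Y Z) (f1 f2 : Hom X Y),
    comp g (f1 + f2) = comp g f1 + comp g f2
}.
Arguments Hom {p}.
Arguments idm {p}.
Arguments comp {p X Y Z}.

Definition is_iso (C : PreaddCat) (X Y : C) (f : Hom X Y) : Prop :=
  exists g : Hom Y X, comp g f = idm X /\ comp f g = idm Y.

Definition is_zero_obj (C : PreaddCat) (K : C) : Prop := idm K = 0.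

Record AddCat := {
  add_pre :> PreaddCat;
  zero_obj : add_pre;
  zero_objP : is_zero_obj zero_obj;
  biprodP : forall X Y : add_pre, exists (S : add_pre)
      (i1 : Hom X S) (i2 : Hom Y S) (p1 : Hom S X) (p2 : Hom S Y),
      [/\ comp p1 i1 = idm X, comp p2 i2 = idm Y, comp p1 i2 = 0,
          comp p2 i1 = 0 & comp i1 p1 + comp i2 p2 = idm S]
}.

Record AddFunctor (C D : PreaddCat) := {
  Fo : C -> D;
  Fm : forall X Y : C, Hom X Y -> Hom (Fo X) (Fo Y);
  Fm_id : forall X, Fm (idm X) = idm (Fo X);
  Fm_comp : forall X Y Z (g : Hom Y Z) (f : Hom X Y), Fm (comp g f) = comp (Fm g) (Fm f);
  Fm_add : forall X Y (f g : Hom X Y), Fm (f + g) = Fm f + Fm g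
}.
Arguments Fo {C D}.
Arguments Fm {C D} _ {X Y}.

Definition full_functor (C D : PreaddCat) (F : AddFunctor C D) : Prop :=
  forall (X Y : C) (g : Hom (Fo F X) (Fo F Y)), exists f : Hom X Y, Fm F f = g.

Definition faithful_functor (C D : PreaddCat) (F : AddFunctor C D) : Prop :=
  forall (X Y : C) (f g : Hom X Y), Fm F f = Fm F g -> f = g.

Definition ess_surj (C D : PreaddCat) (F : AddFunctor C D) : Prop :=
  forall Y : D, exists (X : C) (u : Hom (Fo F X) Y), is_iso u.

Definition equivalence (C D : PreaddCat) (F : AddFunctor C D) : Prop :=
  [/\ full_functor F, faithful_functor F & ess_surj F].

Record TriaCat := {
  tr_add :> AddCat;
  sh : AddFunctor tr_add tr_add;
  sh_equiv : equivalence sh;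
  dist : forall X Y Z : tr_add,
      Hom X Y -> Hom Y Z -> Hom Z (Fo sh X) -> Prop;
  TR1_iso : forall X Y Z X' Y' Z' (u : Hom X Y) (v : Hom Y Z) (w : Hom Z (Fo sh X))
      (u' : Hom X' Y') (v' : Hom Y' Z') (w' : Hom Z' (Fo sh X'))
      (a : Hom X X') (b : Hom Y Y') (c : Hom Z Z'),
      is_iso a -> is_iso b -> is_iso c ->
      comp b u = comp u' a -> comp c v = comp v' b ->
      comp (Fm sh a) w = comp w' c ->
      dist u v w -> dist u' v' w';
  TR1_id : forall X : tr_add,
      dist (idm X) (0 : Hom X (zero_obj tr_add)) (0 : Hom (zero_obj tr_add) (Fo sh X));
  TR1_ext : forall (X Y : tr_add) (u : Hom X Y),
      exists (Z : tr_add) (v : Hom Y Z) (w : Hom Z (Fo sh X)), dist u v w;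
  TR2 : forall X Y Z (u : Hom X Y) (v : Hom Y Z) (w : Hom Z (Fo sh X)),
      dist u v w <-> dist v w (- Fm sh u);
  TR3 : forall X Y Z X' Y' Z' (u : Hom X Y) (v : Hom Y Z) (w : Hom Z (Fo sh X))
      (u' : Hom X' Y') (v' : Hom Y' Z') (w' : Hom Z' (Fo sh X'))
      (a : Hom X X') (b : Hom Y Y'),
      dist u v w -> dist u' v' w' -> comp b u = comp u' a ->
      exists c : Hom Z Z', comp c v = comp v' b /\ comp (Fm sh a) w = comp w' c;
  TR4 : forall X Y Z Z' X' Y' (u : Hom X Y) (v : Hom Y Z)
      (j : Hom Y Z') (k : Hom Z' (Fo sh X))
      (l : Hom Z X') (i : Hom X' (Fo sh Y))
      (m : Hom Z Y') (n : Hom Y' (Fo sh X)),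
      dist u j k -> dist v l i -> dist (comp v u) m n ->
      exists (f : Hom Z' Y') (g : Hom Y' X'),
        [/\ dist f g (comp (Fm sh j) i),
            comp f j = comp m v, comp n f = k,
            comp g m = l & comp (Fm sh u) n = comp i g]
}.

Record TriaFunctor (A B : TriaCat) := {
  tF :> AddFunctor A B;
  xi : forall X : A, Hom (Fo tF (Fo (sh A) X)) (Fo (sh B) (Fo tF X));
  xi_nat : forall (X Y : A) (f : Hom X Y),
      comp (xi Y) (Fm tF (Fm (sh A) f)) = comp (Fm (sh B) (Fm tF f)) (xi X);
  xi_iso : forall X : A, is_iso (xi X);
  tF_dist : forall (X Y Z : A) (u : Hom X Y) (v : Hom Y Z) (w : Hom Z (Fo (sh A) X)),
      dist u v w -> dist (Fm tF u) (Fm tF v) (comp (xi X) (Fm tF w))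
}.

Definition objective (C D : PreaddCat) (F : AddFunctor C D) : Prop :=
  forall (X Y : C) (f : Hom X Y), Fm F f = 0 ->
    exists (K : C) (a : Hom X K) (b : Hom K Y),
      f = comp b a /\ is_zero_obj (Fo F K).

(* Complete f : X -> Y to a triangle X -> Y -v-> Z -> X[1]. Since F f = 0, the image F v
   is a split monomorphism, and by fullness its retraction lifts to some t, so that
   h := t v satisfies F h = 1 and h f = 0. Completing h to a triangle K -k-> Y -h-> Y,
   the morphism f factors through k because h f = 0, while F K is zero because its
   image triangle has the isomorphism F h as second arrow. *)
From Pilot Require Import Defs.
From mathcomp Require Import all_boot all_algebra.
Set Implicit Arguments. Unset Strict Implicit. Unset Printing Implicit Defensive.
Import GRing.Theory.
Local Open Scope ring_scope.
Local Notation Hom := Defs.Hom.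
Local Notation comp := Defs.comp.
Local Notation compA := Defs.compA.

Section Preadditive.
Variable C : PreaddCat.

Lemma compm0 (X Y Z : C) (g : Hom Y Z) : comp g (0 : Hom X Y) = 0.
Proof. by apply: (@addrI _ (comp g 0)); rewrite -compDr !addr0. Qed.

Lemma comp0m (X Y Z : C) (f : Hom X Y) : comp (0 : Hom Y Z) f = 0.
Proof. by apply: (@addrI _ (comp 0 f)); rewrite -compDl !addr0. Qed.

Lemma compmN (X Y Z : C) (g : Hom Y Z) (f : Hom X Y) : comp g (- f) = - comp g f.
Proof. by apply/eqP; rewrite -addr_eq0 -compDr addNr compm0. Qed.

Lemma compNm (X Y Z : C) (g : Hom Y Z) (f : Hom X Y) : comp (- g) f = - comp g f.
Proof. by apply/eqP; rewrite -addr_eq0 -compDl addNr comp0m. Qed.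

Lemma is_iso_idm (X : C) : is_iso (idm X).
Proof. by exists (idm X); rewrite comp1m. Qed.

End Preadditive.

Lemma Fm0 (C D : PreaddCat) (F : AddFunctor C D) (X Y : C) : Fm F (0 : Hom X Y) = 0.
Proof. by apply: (@addrI _ (Fm F 0)); rewrite -Fm_add !addr0. Qed.

Lemma FmN (C D : PreaddCat) (F : AddFunctor C D) (X Y : C) (f : Hom X Y) :
  Fm F (- f) = - Fm F f.
Proof. by apply/eqP; rewrite -addr_eq0 -Fm_add addNr Fm0. Qed.

Section Triangulated.
Variable T : TriaCat.
Local Notation "X [1]" := (Fo (sh T) X) (at level 2, format "X [1]").

Lemma sh_full (X Y : T) (g : Hom X[1] Y[1]) : exists f : Hom X Y, Fm (sh T) f = g.
Proof. by have [full _ _] := sh_equiv T; apply: full. Qed.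

Lemma sh_faithful (X Y : T) (f g : Hom X Y) : Fm (sh T) f = Fm (sh T) g -> f = g.
Proof. by have [_ faithful _] := sh_equiv T; apply: faithful. Qed.

Lemma dist_comp0 (X Y Z : T) (u : Hom X Y) (v : Hom Y Z) (w : Hom Z X[1]) :
  dist u v w -> comp v u = 0.
Proof.
move=> duvw.
have [c [cv _]] := TR3 (TR1_id X) duvw (a := idm X) (b := u) erefl.
by rewrite compm0 in cv.
Qed.

Lemma dist_zero_idm (W : T) :
  dist (0 : Hom (zero_obj T) W) (idm W) (0 : Hom W (zero_obj T)[1]).
Proof.
apply/TR2; rewrite Fm0 oppr0.
apply: (TR1_iso (a := idm W) (b := idm W) (c := 0) _ _ _ _ _ _ (TR1_id W)).
- exact: is_iso_idm.
- exact: is_iso_idm.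
- exists 0; split; first by rewrite compm0 zero_objP.
  by rewrite compm0 -Fm_id zero_objP Fm0.
- by [].
- by rewrite compm0 comp0m.
- by rewrite !compm0.
Qed.

Lemma dist_factor_next (X Y Z W : T) (u : Hom X Y) (v : Hom Y Z) (w : Hom Z X[1])
    (g : Hom Y W) :
  dist u v w -> comp g u = 0 -> exists g' : Hom Z W, g = comp g' v.
Proof.
move=> duvw gu0.
have [c [cv _]] := TR3 duvw (dist_zero_idm W) (a := 0) (b := g)
  ltac:(by rewrite gu0 compm0).
by exists c; rewrite cv comp1m.
Qed.

Lemma dist_factor_prev (X Y Z W : T) (u : Hom X Y) (v : Hom Y Z) (w : Hom Z X[1])
    (g : Hom W Y) :
  dist u v w -> comp v g = 0 -> exists g' : Hom W X, g = comp u g'.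
Proof.
move=> duvw vg0.
have rot_id := proj1 (TR2 _ _ _) (TR1_id W).
have rot_uvw := proj1 (TR2 _ _ _) duvw.
have [c [_ c_sh]] := TR3 rot_id rot_uvw (a := g) (b := 0) ltac:(by rewrite vg0 compm0).
rewrite compmN compNm Fm_id compm1 in c_sh.
have [g' shg'] := sh_full c.
exists g'; apply: sh_faithful.
by rewrite Fm_comp shg' (oppr_inj c_sh).
Qed.

Lemma dist_ext_prev (Y Z : T) (v : Hom Y Z) :
  exists (X : T) (u : Hom X Y) (w : Hom Z X[1]), dist u v w.
Proof.
have [P [p [q dvpq]]] := TR1_ext v.
have [_ _ ess] := sh_equiv T.
have [X [a [a' [a'a aa']]]] := ess P.
have [u shu] := sh_full (comp q a).
exists X, (- u), (comp a' p).
apply/TR2; rewrite FmN opprK.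
apply: (TR1_iso (a := idm Y) (b := idm Z) (c := a') _ _ _ _ _ _ dvpq).
- exact: is_iso_idm.
- exact: is_iso_idm.
- by exists a.
- by rewrite comp1m compm1.
- by rewrite compm1.
- by rewrite Fm_id comp1m shu -compA aa' compm1.
Qed.

Lemma dist_iso_zero (X Y Z : T) (u : Hom X Y) (v : Hom Y Z) (w : Hom Z X[1]) :
  dist u v w -> is_iso v -> is_zero_obj X.
Proof.
move=> duvw [v' [v'v vv']].
have u0 : u = 0 by rewrite -(comp1m u) -v'v -compA (dist_comp0 duvw) compm0.
have rot_uvw := proj1 (TR2 _ _ _) duvw.
have w0 : w = 0 by rewrite -(compm1 w) -vv' compA (dist_comp0 rot_uvw) comp0m.
have [g idg] := dist_factor_next (g := idm X[1]) (proj1 (TR2 _ _ _) rot_uvw)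
  ltac:(by rewrite w0 compm0).
rewrite u0 Fm0 oppr0 compm0 in idg.
by apply: sh_faithful; rewrite Fm_id Fm0.
Qed.

End Triangulated.

Lemma full_tria_lift_idm_annihilating (A B : TriaCat) (F : TriaFunctor A B) (X Y : A)
    (f : Hom X Y) :
  full_functor F -> Fm F f = 0 ->
  exists h : Hom Y Y, Fm F h = idm (Fo F Y) /\ comp h f = 0.
Proof.
move=> full Ff0.
have [Z [v [w dfvw]]] := TR1_ext f.
have [t idt] := dist_factor_next (g := idm (Fo F Y)) (tF_dist F dfvw)
  ltac:(by rewrite Ff0 compm0).
have [t0 Ft0] := full _ _ t.
exists (comp t0 v); split; first by rewrite Fm_comp Ft0 -idt.
by rewrite -compA (dist_comp0 dfvw) compm0.
Qed.

Theorem mainTheorem9 (A B : TriaCat) (F : TriaFunctor A B) :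
  full_functor F -> objective F.
Proof.
move=> full X Y f Ff0.
have [h [Fh hf0]] := full_tria_lift_idm_annihilating full Ff0.
have [K [k [w dkhw]]] := dist_ext_prev h.
have [g fkg] := dist_factor_prev dkhw hf0.
exists K, g, k; split => //.
by apply: (dist_iso_zero (tF_dist F dkhw)); rewrite Fh; apply: is_iso_idm.
Qed.
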